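(* Let $\mathbf{x}\in\mathcal{P}$, and let the quantities $\tilde x_{v,s,t}$, $r_{v,s,t}$, $J_{v,t}$ be computed by the SN dynamic programs using $\mathbf{x}$ as the ex ante solution. Then for every volunteer $v\in[V]$, $J_{v,1}\ge\frac{1}{2-q}f_v(\mathbf{x})$, where $q$ is the minimum discrete hazard rate of $g$.
   Context: Data: volunteers $[V]$, task types $[S]$, horizon $T$, $\lambda_{s,t}\ge0$ with $\sum_{s=1}^S\lambda_{s,t}\le1$ and $\lambda_{0,t}=1-\sum_{s=1}^S\lambda_{s,t}$, $p_{v,s}\in[0,1]$, a probability mass function $g$ on the positive integers with CDF $G(\tau)=\sum_{i\le\tau}g(i)$, $G(0)=0$. MDHR: $q=\min_{\tau\in\mathbb{N}}\frac{g(\tau)}{1-G(\tau-1)}$ (with $\frac00:=1$). $\mathcal{P}$: set of $\mathbf{x}\in\mathbb{R}^{V\times S\times T}$ with $0\le x_{v,s,t}\le1$ and $\sum_{\tau=1}^t\sum_{s=1}^S\lambda_{s,\tau}x_{v,s,\tau}(1-G(t-\tau))\le1$ for all $v,t$. $f_v(\mathbf{x})=\sum_{t=1}^T\sum_{s=1}^S\lambda_{s,t}\big(\prod_{u<v}(1-p_{u,s}x_{u,s,t})\big)p_{v,s}x_{v,s,t}$. SN dynamic programs with ex ante solution $\mathbf{x}$: for $v=1,\dots,V$ in order: $r_{v,s,t}=p_{v,s}\prod_{u=1}^{v-1}(1-\tilde x_{u,s,t}p_{u,s})$; $J_{v,T+1}=0$; for $t=T$ down to $1$: $\tilde x_{v,s,t}=x_{v,s,t}\,\mathbb{I}\{r_{v,s,t}+\sum_{\tau=t+1}^Tg(\tau-t)J_{v,\tau}\ge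 J_{v,t+1}\}$ for $s\in[S]$ (with $\tilde x_{v,0,t}=r_{v,0,t}=0$), and $J_{v,t}=\sum_{s=0}^S\lambda_{s,t}\big((1-\tilde x_{v,s,t})J_{v,t+1}+\tilde x_{v,s,t}(r_{v,s,t}+\sum_{\tau=t+1}^Tg(\tau-t)J_{v,\tau})\big)$. *)

From HB Require Import structures.
From mathcomp Require Import all_boot all_order all_algebra.
From mathcomp Require Import all_classical all_reals all_analysis.
Set Implicit Arguments. Unset Strict Implicit. Unset Printing Implicit Defensive.
Import Order.TTheory GRing.Theory Num.Theory.
Local Open Scope ring_scope.

(* Data: lam s t = lambda_{s,t}, p v s = p_{v,s},
   g i = g(i) (pmf on positive integers; g 0 is irrelevant),
   x v s t = x_{v,s,t}. *)

Definition cdfG (R : realType) (g : nat -> R) (n : nat) : R :=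
  \sum_(1 <= i < n.+1) g i.

Definition hazard (R : realType) (g : nat -> R) (tau : nat) : R :=
  let d := 1 - cdfG g tau.-1 in
  if (g tau == 0) && (d == 0) then 1 else g tau / d.

Definition mdhr (R : realType) (g : nat -> R) : R :=
  inf [set hazard g tau | tau in [set tau : nat | (0 < tau)%N]].

Definition lam0 (R : realType) (S : nat) (lam : nat -> nat -> R) (t : nat) : R :=
  1 - \sum_(1 <= s < S.+1) lam s t.
Definition lamE (R : realType) (S : nat) (lam : nat -> nat -> R) (s t : nat) : R :=
  if s == 0%N then lam0 S lam t else lam s t.

Definition in_P (R : realType) (V S T : nat) (lam : nat -> nat -> R)
    (g : nat -> R) (x : nat -> nat -> nat -> R) : Prop :=
  (forall v s t, (1 <= v <= V)%N -> (1 <= s <= S)%N -> (1 <= t <= T)%N ->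
     0 <= x v s t <= 1) /\
  (forall v t, (1 <= v <= V)%N -> (1 <= t <= T)%N ->
     \sum_(1 <= tau < t.+1) \sum_(1 <= s < S.+1)
        lam s tau * x v s tau * (1 - cdfG g (t - tau)%N) <= 1).

Definition f_v (R : realType) (S T : nat) (lam p : nat -> nat -> R)
    (x : nat -> nat -> nat -> R) (v : nat) : R :=
  \sum_(1 <= t < T.+1) \sum_(1 <= s < S.+1)
    lam s t * (\prod_(1 <= u < v) (1 - p u s * x u s t)) * p v s * x v s t.

Definition cont (R : realType) (T : nat) (g : nat -> R) (J : nat -> R) (t : nat) : R :=
  \sum_(t.+1 <= tau < T.+1) g (tau - t)%N * J tau.

Definition rE (R : realType) (r : nat -> nat -> R) (s t : nat) : R :=
  if s == 0%N then 0 else r s t.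

Definition xtil_J (R : realType) (T : nat) (g : nat -> R)
    (x : nat -> nat -> nat -> R) (v : nat) (r : nat -> nat -> R)
    (J : nat -> R) (s t : nat) : R :=
  if s == 0%N then 0
  else x v s t * (if J t.+1 <= r s t + cont T g J t then 1 else 0).

Definition Jstep (R : realType) (S T : nat) (lam : nat -> nat -> R) (g : nat -> R)
    (x : nat -> nat -> nat -> R) (v : nat) (r : nat -> nat -> R)
    (J : nat -> R) (t : nat) : R :=
  \sum_(0 <= s < S.+1) lamE S lam s t *
     ((1 - xtil_J T g x v r J s t) * J t.+1
      + xtil_J T g x v r J s t * (rE r s t + cont T g J t)).

(* backward induction: after n steps, the table holds J_{v,tau} for
   tau >= T+1-n, with J_{v,tau} = 0 for tau > T (in particular J_{v,T+1} = 0) *)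
Fixpoint Jtab (R : realType) (S T : nat) (lam : nat -> nat -> R) (g : nat -> R)
    (x : nat -> nat -> nat -> R) (v : nat) (r : nat -> nat -> R) (n : nat)
    : nat -> R :=
  match n with
  | 0 => fun _ => 0
  | n'.+1 =>
      let J := Jtab S T lam g x v r n' in
      fun tau => if tau == (T - n')%N then Jstep S T lam g x v r J (T - n')
                 else J tau
  end.

Definition Jv (R : realType) (S T : nat) (lam : nat -> nat -> R) (g : nat -> R)
    (x : nat -> nat -> nat -> R) (v : nat) (r : nat -> nat -> R) : nat -> R :=
  Jtab S T lam g x v r T.

Definition xtil (R : realType) (S T : nat) (lam : nat -> nat -> R) (g : nat -> R)
    (x : nat -> nat -> nat -> R) (v : nat) (r : nat -> nat -> R) (s t : nat) : R :=
  xtil_J T g x v r (Jv S T lam g x v r) s t.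

Fixpoint pre (R : realType) (S T : nat) (lam p : nat -> nat -> R) (g : nat -> R)
    (x : nat -> nat -> nat -> R) (n : nat) : nat -> nat -> R :=
  match n with
  | 0 => fun _ _ => 1
  | n'.+1 =>
      let P := pre S T lam p g x n' in
      let r := fun s t => p n'.+1 s * P s t in
      fun s t => P s t * (1 - xtil S T lam g x n'.+1 r s t * p n'.+1 s)
  end.

Definition rSN (R : realType) (S T : nat) (lam p : nat -> nat -> R) (g : nat -> R)
    (x : nat -> nat -> nat -> R) (v : nat) (s t : nat) : R :=
  p v s * pre S T lam p g x v.-1 s t.

Definition JSN (R : realType) (S T : nat) (lam p : nat -> nat -> R) (g : nat -> R)
    (x : nat -> nat -> nat -> R) (v t : nat) : R :=
  Jv S T lam g x v (rSN S T lam p g x v) t.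

Definition xtilSN (R : realType) (S T : nat) (lam p : nat -> nat -> R) (g : nat -> R)
    (x : nat -> nat -> nat -> R) (v s t : nat) : R :=
  xtil S T lam g x v (rSN S T lam p g x v) s t.

From HB Require Import structures.
From mathcomp Require Import all_boot all_order all_algebra.
From mathcomp Require Import all_classical all_reals all_analysis.
From mathcomp Require Import zify ring lra.
Import Order.TTheory GRing.Theory Num.Theory.
Import numFieldNormedType.Exports.
Local Open Scope classical_set_scope.
Local Open Scope ring_scope.

(* Write [D t = J_{v,t} - J_{v,t+1}] and [Y t = sum_s lam_{s,t} x_{v,s,t}].
   Since [x~] only switches off the tasks whose acceptance loses value, one
   step of the dynamic program gives
     [D t >= sum_s lam_{s,t} x_{v,s,t} r_{v,s,t} + Y t (C t - J_{v,t+1})],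
   where [C t] is the continuation value.  Summation by parts turns
   [J_{v,t+1} - C t] into [sum_{k > t} D k (1 - G(k - t))]; exchanging the
   sums, [D k] gets the weight [sum_{t < k} Y t (1 - G(k - t))], which the
   hazard bound [1 - G(m+1) <= (1 - q)(1 - G(m))] and the constraint of [P]
   at time [k - 1] cap at [1 - q].  Hence the total expected gain is at most
   [sum_k D k + (1 - q) sum_k D k = (2 - q) J_{v,1}].  Finally [x~ <= x]
   gives [r_{v,s,t} >= p_{v,s} prod_{u<v} (1 - p_{u,s} x_{u,s,t})], so the
   total gain dominates [f_v(x)]. *)

Section Survival.
Context {R : realType} {g : nat -> R}.

Lemma cdfG0 : cdfG g 0 = 0.
Proof. by rewrite /cdfG big_geq. Qed.

Lemma cdfGS n : cdfG g n.+1 = cdfG g n + g n.+1.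
Proof. by rewrite /cdfG big_nat_recr. Qed.

Hypothesis g_ge0 : forall i, (0 < i)%N -> 0 <= g i.

Lemma cdfG_nondecreasing : {homo cdfG g : m n / (m <= n)%N >-> m <= n}.
Proof.
move=> m n mn; rewrite /cdfG [X in _ <= X](@big_cat_nat _ _ _ m.+1) //= ?ltnS // lerDl.
by rewrite big_nat_cond sumr_ge0 // => i /andP[/andP[mi _] _]; apply: g_ge0; lia.
Qed.

Hypothesis cdfG_cvg1 : cdfG g @ \oo --> (1 : R).

Lemma cdfG_le1 n : cdfG g n <= 1.
Proof.
rewrite -(cvg_lim _ cdfG_cvg1) //.
exact: nondecreasing_cvgn_le cdfG_nondecreasing (cvgP _ cdfG_cvg1) n.
Qed.

Lemma hazard_ge0 tau : (0 < tau)%N -> 0 <= hazard g tau.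
Proof.
move=> tau_gt0; rewrite /hazard; case: ifP => // _.
by rewrite divr_ge0 ?g_ge0 // subr_ge0 cdfG_le1.
Qed.

Lemma mdhr_le_hazard tau : (0 < tau)%N -> mdhr g <= hazard g tau.
Proof.
move=> tau_gt0; apply: ge_inf; last by exists tau.
by exists 0 => _ [t t_gt0 <-]; exact: hazard_ge0.
Qed.

(* If [1 - G(m) = 0] the hazard is a junk value, but then the left side vanishes. *)
Lemma mdhr_mul_survival_le m : mdhr g * (1 - cdfG g m) <= g m.+1.
Proof.
have := @mdhr_le_hazard m.+1 (ltn0Sn m); rewrite /hazard /=.
have [->|surv_neq0] := eqVneq (1 - cdfG g m) 0; first by rewrite mulr0 g_ge0.
have surv_gt0 : 0 < 1 - cdfG g m by rewrite lt_def surv_neq0 subr_ge0 cdfG_le1.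
by rewrite andbF -ler_pdivlMr.
Qed.

Lemma mdhr_le1 : mdhr g <= 1.
Proof.
have := mdhr_mul_survival_le 0; have := cdfG_le1 1.
rewrite cdfGS cdfG0 subr0 mulr1 add0r; lra.
Qed.

Lemma survival_decay m : 1 - cdfG g m.+1 <= (1 - mdhr g) * (1 - cdfG g m).
Proof. have := mdhr_mul_survival_le m; rewrite cdfGS; nra. Qed.

End Survival.

Lemma sum_triangle_exchange (V : nmodType) (F : nat -> nat -> V) m n :
  \sum_(m <= i < n) \sum_(i.+1 <= j < n) F i j =
  \sum_(m <= j < n) \sum_(m <= i < j) F i j.
Proof.
transitivity (\sum_(m <= i < n) \sum_(m <= j < n | (i < j)%N) F i j).
  apply: eq_big_nat => i /andP[mi _].
  by rewrite (@big_nat_widenl _ _ _ _ m) //; exact: leqW.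
rewrite (exchange_big_dep_nat xpredT) //=; apply: eq_big_nat => j /andP[_ jn].
by rewrite [RHS](@big_nat_widen _ _ _ _ _ n) // ltnW.
Qed.

Lemma sum_by_parts_survival {R : realType} (g J : nat -> R) t m :
  J t.+1 - J (t + m).+1 * (1 - cdfG g m)
    - \sum_(t.+1 <= tau < (t + m).+1) g (tau - t)%N * J tau
  = \sum_(t.+1 <= k < (t + m).+1) (J k - J k.+1) * (1 - cdfG g (k - t)).
Proof.
elim: m => [|m IH]; first by rewrite addn0 !big_geq // cdfG0; ring.
rewrite addnS big_nat_recr ?ltnS ?leq_addr // [RHS]big_nat_recr ?ltnS ?leq_addr //= -IH.
have -> : ((t + m).+1 - t)%N = m.+1 by lia.
rewrite cdfGS; ring.
Qed.

Section ValueBound.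
Context {R : realType} {T : nat} {g : nat -> R} {q : R} {Y A J : nat -> R}.

Hypothesis q_le1 : q <= 1.
Hypothesis survival_le : forall m, 1 - cdfG g m.+1 <= (1 - q) * (1 - cdfG g m).
Hypothesis Y_ge0 : forall t, (1 <= t <= T)%N -> 0 <= Y t.
Hypothesis Y_capacity : forall t, (1 <= t <= T)%N ->
  \sum_(1 <= tau < t.+1) Y tau * (1 - cdfG g (t - tau)) <= 1.
Hypothesis J_end : J T.+1 = 0.
Hypothesis J_nonincreasing : forall t, (1 <= t <= T)%N -> 0 <= J t - J t.+1.
Hypothesis J_gain : forall t, (1 <= t <= T)%N ->
  A t + Y t * (cont T g J t - J t.+1) <= J t - J t.+1.

Lemma sum_decrements : \sum_(1 <= t < T.+1) (J t - J t.+1) = J 1.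
Proof.
rewrite (@telescope_sumr_eq _ _ _ (fun k => - J k)) // => [|k _]; last by rewrite opprK addrC.
by rewrite J_end oppr0 opprK add0r.
Qed.

Lemma continuation_gap t : (t <= T)%N ->
  J t.+1 - cont T g J t = \sum_(t.+1 <= k < T.+1) (J k - J k.+1) * (1 - cdfG g (k - t)).
Proof.
move=> tT; have := sum_by_parts_survival g J t (T - t).
by rewrite subnKC // J_end mul0r subr0.
Qed.

(* The constraint of [P] at time [k - 1], discounted once more by the hazard
   rate, bounds the weight that the decrement at time [k] receives. *)
Lemma tail_weight_le k : (1 <= k <= T)%N ->
  \sum_(1 <= t < k) Y t * (1 - cdfG g (k - t)) <= 1 - q.
Proof.
case: k => [//|k] /andP[_ kT].
apply: (@le_trans _ _ ((1 - q) * \sum_(1 <= t < k.+1) Y t * (1 - cdfG g (k - t)))).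
  rewrite mulr_sumr; apply: ler_sum_nat => t /andP[t_gt0 tk].
  rewrite subSn // mulrCA ler_wpM2l ?survival_le //; apply: Y_ge0; lia.
case: k kT => [|k] kT; first by rewrite big_geq // mulr0 subr_ge0.
by rewrite -[X in _ <= X]mulr1 ler_wpM2l ?subr_ge0 // Y_capacity //; lia.
Qed.

Lemma sum_gain_le : \sum_(1 <= t < T.+1) A t <= (2 - q) * J 1.
Proof.
have gain_le t : (1 <= t <= T)%N -> A t <= (J t - J t.+1) +
    Y t * \sum_(t.+1 <= k < T.+1) (J k - J k.+1) * (1 - cdfG g (k - t)).
  move=> tT; rewrite -continuation_gap; last by lia.
  by have := @J_gain t tT; rewrite !mulrBr; lra.
have exchanged : \sum_(1 <= t < T.+1)
    Y t * \sum_(t.+1 <= k < T.+1) (J k - J k.+1) * (1 - cdfG g (k - t)) =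
  \sum_(1 <= k < T.+1) (J k - J k.+1) * \sum_(1 <= t < k) Y t * (1 - cdfG g (k - t)).
  under eq_bigr do [rewrite mulr_sumr]; rewrite sum_triangle_exchange.
  by apply: eq_bigr => k _; rewrite mulr_sumr; apply: eq_bigr => t _; rewrite mulrCA.
have weighted_le : \sum_(1 <= k < T.+1)
    (J k - J k.+1) * \sum_(1 <= t < k) Y t * (1 - cdfG g (k - t)) <= (1 - q) * J 1.
  rewrite -sum_decrements mulr_sumr; apply: ler_sum_nat => k kT.
  by rewrite mulrC ler_wpM2r ?J_nonincreasing ?tail_weight_le.
apply: (le_trans (ler_sum_nat _)) => [t tT|]; first exact: gain_le.
by rewrite /= big_split /= sum_decrements exchanged; lra.
Qed.

End ValueBound.

Section BackwardInduction.
Context {R : realType} {S T : nat} {lam : nat -> nat -> R} {g : nat -> R}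
  {x : nat -> nat -> nat -> R} {v : nat} {r : nat -> nat -> R}.

Lemma Jtab_gtT n tau : (T < tau)%N -> Jtab S T lam g x v r n tau = 0.
Proof. by move=> Ttau; elim: n => //= n ->; case: eqP => //; lia. Qed.

Lemma Jtab_stable n m tau : (n <= m)%N -> (T - n < tau)%N ->
  Jtab S T lam g x v r m tau = Jtab S T lam g x v r n tau.
Proof.
move=> nm ntau; rewrite -(subnKC nm).
by elim: (m - n)%N => [|k IH]; rewrite ?addn0 // addnS /= IH; case: eqP => //; lia.
Qed.

Lemma Jstep_ext (J1 J2 : nat -> R) t : (forall tau, (t < tau)%N -> J1 tau = J2 tau) ->
  Jstep S T lam g x v r J1 t = Jstep S T lam g x v r J2 t.
Proof.
move=> J12; have next : J1 t.+1 = J2 t.+1 by exact: J12.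
have cont12 : cont T g J1 t = cont T g J2 t.
  by apply: eq_big_nat => tau /andP[ttau _]; rewrite J12.
by rewrite /Jstep /xtil_J next cont12.
Qed.

Lemma Jv_end : Jv S T lam g x v r T.+1 = 0.
Proof. exact: Jtab_gtT. Qed.

Lemma Jv_step t : (1 <= t <= T)%N ->
  Jv S T lam g x v r t = Jstep S T lam g x v r (Jv S T lam g x v r) t.
Proof.
move=> tT; rewrite /Jv (@Jtab_stable (T - t).+1); [|lia|lia].
rewrite /= subKn ?eqxx; last by case/andP: tT.
by apply: Jstep_ext => tau ttau; rewrite (@Jtab_stable (T - t)) //; lia.
Qed.

End BackwardInduction.

Section OneStep.
Context {R : realType} {S T : nat} {lam : nat -> nat -> R} {g : nat -> R}
  {x : nat -> nat -> nat -> R} {v : nat} {r : nat -> nat -> R} {J : nat -> R} {t : nat}.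

Local Notation xt s := (xtil_J T g x v r J s t).
Local Notation gap s := (r s t + cont T g J t - J t.+1).

(* The weight [lam0 = 1 - \sum_s lam s t] of the outside option makes the
   [J t.+1] terms cancel. *)
Lemma Jstep_sub_next : Jstep S T lam g x v r J t - J t.+1 =
  \sum_(1 <= s < S.+1) lam s t * (xt s * gap s).
Proof.
rewrite /Jstep big_ltn // [X in X - _](_ : _ = lam0 S lam t * J t.+1 +
    \sum_(1 <= s < S.+1) (lam s t * J t.+1 + lam s t * (xt s * gap s))).
  by rewrite big_split /= -mulr_suml /lam0; ring.
congr (_ + _); first by rewrite /lamE /xtil_J /=; ring.
by apply: eq_big_nat => -[|s] //= _; rewrite /lamE /rE /=; ring.
Qed.

Lemma xtil_J_gap_ge0 s : (0 < s)%N -> 0 <= x v s t -> 0 <= xt s * gap s.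
Proof.
case: s => // s _ x_ge0; rewrite /xtil_J /=.
by case: ifP => [accept|_]; rewrite ?mulr1 ?mulr0 ?mul0r // mulr_ge0 ?subr_ge0.
Qed.

Lemma xtil_J_gap_ge s : (0 < s)%N -> 0 <= x v s t -> x v s t * gap s <= xt s * gap s.
Proof.
case: s => // s _ x_ge0; rewrite /xtil_J /=.
case: ifP => [_|/negbT reject]; first by rewrite mulr1.
by rewrite mulr0 mul0r mulr_ge0_le0 // subr_le0 ltW // ltNge.
Qed.

Hypothesis lam_ge0 : forall s, (1 <= s <= S)%N -> 0 <= lam s t.
Hypothesis x_ge0 : forall s, (1 <= s <= S)%N -> 0 <= x v s t.

Lemma Jstep_sub_next_ge0 : 0 <= Jstep S T lam g x v r J t - J t.+1.
Proof.
rewrite Jstep_sub_next big_nat_cond sumr_ge0 // => s /andP[/andP[s_gt0 sS] _].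
by rewrite mulr_ge0 ?lam_ge0 ?xtil_J_gap_ge0 ?x_ge0 ?s_gt0.
Qed.

Lemma Jstep_gain :
  \sum_(1 <= s < S.+1) lam s t * x v s t * r s t
    + (\sum_(1 <= s < S.+1) lam s t * x v s t) * (cont T g J t - J t.+1)
  <= Jstep S T lam g x v r J t - J t.+1.
Proof.
rewrite Jstep_sub_next mulr_suml -big_split /=.
apply: ler_sum_nat => s /andP[s_gt0 sS]; rewrite ltnS in sS.
rewrite (_ : _ + _ = lam s t * (x v s t * gap s)); last by ring.
by rewrite ler_wpM2l ?lam_ge0 ?xtil_J_gap_ge ?x_ge0 ?s_gt0.
Qed.

End OneStep.

Lemma xtil_J_le (R : realType) T (g : nat -> R) x v r J s t :
  0 <= x v s t -> xtil_J T g x v r J s t <= x v s t.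
Proof. by rewrite /xtil_J; case: eqP => // _; case: ifP; rewrite ?mulr1 ?mulr0. Qed.

Section PrefixProduct.
Context {R : realType} {V S T : nat} {lam p : nat -> nat -> R} {g : nat -> R}
  {x : nat -> nat -> nat -> R}.

Hypothesis x01 : forall v s t, (1 <= v <= V)%N -> (1 <= s <= S)%N -> (1 <= t <= T)%N ->
  0 <= x v s t <= 1.
Hypothesis p01 : forall v s, (1 <= v <= V)%N -> (1 <= s <= S)%N -> 0 <= p v s <= 1.

Lemma prod_le_pre n s t : (n <= V)%N -> (1 <= s <= S)%N -> (1 <= t <= T)%N ->
  0 <= \prod_(1 <= u < n.+1) (1 - p u s * x u s t) <= pre S T lam p g x n s t.
Proof.
move=> + sS tT; elim: n => [|n IH] nV; first by rewrite big_geq //= ler01 lexx.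
have /andP[prod_ge0 prod_le] := IH (ltnW nV).
have vV : (1 <= n.+1 <= V)%N by rewrite nV.
have /andP[p_ge0 p_le1] := p01 _ _ vV sS; have /andP[x_ge0 x_le1] := x01 _ _ _ vV sS tT.
have px_le1 : p n.+1 s * x n.+1 s t <= 1 by rewrite mulr_ile1.
have factor_le : 1 - p n.+1 s * x n.+1 s t <=
    1 - xtil S T lam g x n.+1 (fun s t => p n.+1 s * pre S T lam p g x n s t) s t * p n.+1 s.
  by rewrite lerD2l lerN2 mulrC ler_wpM2l // xtil_J_le.
by rewrite big_nat_recr //= mulr_ge0 ?subr_ge0 //= ler_pM ?subr_ge0.
Qed.

Hypothesis lam_ge0 : forall s t, (1 <= s <= S)%N -> (1 <= t <= T)%N -> 0 <= lam s t.

Lemma f_v_le_sum_gain v : (1 <= v <= V)%N ->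
  f_v S T lam p x v <= \sum_(1 <= t < T.+1) \sum_(1 <= s < S.+1)
    lam s t * x v s t * rSN S T lam p g x v s t.
Proof.
move=> vV; have /andP[v_gt0 v_leV] := vV.
apply: ler_sum_nat => t tT; apply: ler_sum_nat => s sS.
have /andP[p_ge0 _] := p01 _ _ vV sS; have /andP[x_ge0 _] := x01 _ _ _ vV sS tT.
rewrite /rSN mulrA (_ : _ * p v s * x v s t = lam s t * x v s t * p v s *
    \prod_(1 <= u < v) (1 - p u s * x u s t)); last by ring.
rewrite ler_wpM2l ?mulr_ge0 ?lam_ge0 //.
have /andP[_] := @prod_le_pre v.-1 s t (leq_trans (leq_pred v) v_leV) sS tT.
by rewrite prednK.
Qed.

End PrefixProduct.

Theorem lemma3 (R : realType) (V S T : nat)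
    (lam p : nat -> nat -> R) (g : nat -> R) (x : nat -> nat -> nat -> R)
    (Hlam : forall s t, (1 <= s <= S)%N -> (1 <= t <= T)%N -> 0 <= lam s t)
    (Hlam1 : forall t, (1 <= t <= T)%N -> \sum_(1 <= s < S.+1) lam s t <= 1)
    (Hp : forall v s, (1 <= v <= V)%N -> (1 <= s <= S)%N -> 0 <= p v s <= 1)
    (Hg : forall i, (0 < i)%N -> 0 <= g i)
    (Hg1 : cdfG g @ \oo --> (1 : R))
    (HxP : in_P V S T lam g x) :
  forall v, (1 <= v <= V)%N ->
    (2 - mdhr g)^-1 * f_v S T lam p x v <= JSN S T lam p g x v 1.
Proof.
move=> v vV; have [x01 capacity] := HxP.
have x_ge0 s t : (1 <= s <= S)%N -> (1 <= t <= T)%N -> 0 <= x v s t.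
  by move=> sS tT; have /andP[] := x01 v s t vV sS tT.
have q_le1 : mdhr g <= 1 := mdhr_le1 Hg Hg1.
rewrite ler_pdivrMl; last by rewrite subr_gt0 (le_lt_trans q_le1) ?ltr1n.
apply: le_trans (f_v_le_sum_gain (g := g) x01 Hp Hlam v vV) _.
apply: (sum_gain_le (g := g) (Y := fun t => \sum_(1 <= s < S.+1) lam s t * x v s t)) => //.
- exact: survival_decay.
- move=> t tT; rewrite big_nat_cond sumr_ge0 // => s /andP[/andP[s_gt0 sS] _].
  by rewrite mulr_ge0 ?Hlam ?x_ge0 ?s_gt0.
- by move=> t tT; under eq_bigr do [rewrite mulr_suml]; exact: capacity.
- exact: Jv_end.
- move=> t tT; rewrite /JSN [X in _ <= X - _]Jv_step //.
  by apply: Jstep_sub_next_ge0 => s sS; [exact: Hlam | exact: x_ge0].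
- move=> t tT; rewrite /JSN [X in _ <= X - _]Jv_step //.
  by apply: Jstep_gain => s sS; [exact: Hlam | exact: x_ge0].
Qed.
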